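(* Among the intervals in $\mathcal{M}_\alpha$, the fiducial interval minimizes the expected length for all $\theta\in\Theta$ as well as the length for all $x\in\mathcal{X}$.
   Context: $\Theta$ is a connected open subset of $\mathbb{R}$, $\mathcal{X}\subseteq\mathbb{Z}$ consists of consecutive integers, $\mathrm{P}_\theta$ denotes probability under $P_\theta$, satisfying (A1) $\mathrm{P}_\theta(X=x)>0$ for all $(\theta,x)$; (A2) $\mathrm{P}_\theta(X\leq x)$ strictly decreasing in $\theta$ for each fixed $x\in\mathcal{X}\backslash\sup\mathcal{X}$; (A3) $\mathrm{P}_\theta(X=x)$ differentiable in $\theta$. $\mathcal{M}_\alpha$ is the class of confidence intervals $(L_{\alpha/2}(x),U_{\alpha/2}(x))$ satisfying (D1) $L_{\alpha/2}(x)\leq L_{\alpha/2}(x+1)$ and $U_{\alpha/2}(x)\leq U_{\alpha/2}(x+1)$; (D2) $\inf_{\theta}\mathrm{P}_\theta(L_{\alpha/2}(X)\leq\theta)\geq 1-\alpha/2$ and $\inf_\theta\mathrm{P}_\theta(U_{\alpha/2}(X)\geq\theta)\geq 1-\alpha/2$; (D3) the interval only depends on $x$, $\alpha$ and $P_\theta$. The fiducial interval is $(\theta_L,\theta_U)$ with $\sum_{k\leq x}\mathrm{P}_{\theta_L}(X=k)=\alpha/2$ and $\sum_{k\geq x}\mathrm{P}_{\theta_U}(X=k)=\alpha/2$. Length is $U_{\alpha/2}(x)-L_{\alpha/2}(x)$; expected length is $\sum_k\mathrm{P}_\theta(X=k)(U_{\alpha/2}(k)-L_{\alpha/2}(k))$.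 *)

From HB Require Import structures.
From mathcomp Require Import all_boot all_order all_algebra.
From mathcomp Require Import all_classical all_reals all_analysis.
Set Implicit Arguments. Unset Strict Implicit. Unset Printing Implicit Defensive.
Import Order.TTheory GRing.Theory Num.Theory.
Import numFieldNormedType.Exports.
Local Open Scope classical_set_scope.
Local Open Scope ring_scope.

(* The sample space X is a set of integers; P_theta is given by its pmf
   p theta : int -> R on X.  Probability of an event E under P_theta: *)
Definition Pr {R : realType} (X : set int) (p : R -> int -> R) (th : R)
  (E : set int) : \bar R := \esum_(k in X `&` E) (p th k)%:E.

Definition consecutive (X : set int) : Prop :=
  forall a b c : int, X a -> X c -> (a <= b <= c)%R -> X b.

Definition is_max (X : set int) (x : int) : Prop := X x /\ forall y, X y -> y <= x.
Definition is_min (X : set int) (x : int) : Prop := X x /\ forall y, X y -> x <= y.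

Definition discrete_model {R : realType} (Theta : set R) (X : set int)
  (p : R -> int -> R) : Prop :=
  [/\ (open Theta /\ connected Theta /\ Theta !=set0) /\
        (X !=set0 /\ consecutive X),
      (forall th, Theta th -> Pr X p th setT = 1%E),
      (forall th x, Theta th -> X x -> 0 < p th x),
      (forall x, X x -> ~ is_max X x ->
         forall t1 t2, Theta t1 -> Theta t2 -> t1 < t2 ->
           (Pr X p t2 [set k : int | (k <= x)%R] < Pr X p t1 [set k : int | (k <= x)%R])%E) &
      (forall x, X x -> forall th, Theta th -> derivable (fun t => p t x) th 1)].

(* The class M_alpha: (L, U) with values in the extended reals,
   depending only on x (D3), monotone (D1), with one-sided coverage (D2). *)
Definition in_M {R : realType} (Theta : set R) (X : set int) (p : R -> int -> R)
  (alpha : R) (L U : int -> \bar R) : Prop :=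
  [/\
      (forall x, X x -> X (x + 1)%R -> (L x <= L (x + 1)%R)%E /\ (U x <= U (x + 1)%R)%E),
      ((1 - alpha / 2)%:E <=
         ereal_inf [set Pr X p th [set k : int | (L k <= th%:E)%E] | th in Theta])%E &
      ((1 - alpha / 2)%:E <=
         ereal_inf [set Pr X p th [set k : int | (th%:E <= U k)%E] | th in Theta])%E].

Definition ilength {R : realType} (L U : int -> \bar R) (x : int) : \bar R :=
  (U x - L x)%E.

(* Expected length sum_k P_theta(X = k) (U k - L k), as the difference of the
   sums of the positive and negative parts. *)
Definition exp_length {R : realType} (X : set int) (p : R -> int -> R) (th : R)
  (L U : int -> \bar R) : \bar R :=
  let g := fun k => ((p th k)%:E * ilength L U k)%E in
  (\esum_(k in X) g^\+ k - \esum_(k in X) g^\- k)%E.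

(* The fiducial interval (thL, thU):
   thL x solves  sum_{k >= x} P_thL(X = k) = alpha/2,
   thU x solves  sum_{k <= x} P_thU(X = k) = alpha/2,
   with the boundary conventions thL (min X) = inf Theta and
   thU (max X) = sup Theta (where the equation has no solution). *)
Definition is_fiducial {R : realType} (Theta : set R) (X : set int)
  (p : R -> int -> R) (alpha : R) (thL thU : int -> \bar R) : Prop :=
  forall x, X x ->
    (if `[< is_min X x >] then thL x = ereal_inf (EFin @` Theta)
     else exists t, [/\ Theta t, thL x = t%:E &
                        Pr X p t [set k : int | (x <= k)%R] = (alpha / 2)%:E]) /\
    (if `[< is_max X x >] then thU x = ereal_sup (EFin @` Theta)
     else exists t, [/\ Theta t, thU x = t%:E &
                        Pr X p t [set k : int | (k <= x)%R] = (alpha / 2)%:E]).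

From HB Require Import structures.
From mathcomp Require Import all_boot all_order all_algebra.
From mathcomp Require Import all_classical all_reals all_analysis.
From mathcomp Require Import finmap zify lra.
Import Order.TTheory GRing.Theory Num.Theory.
Import numFieldNormedType.Exports.
Local Open Scope classical_set_scope.
Local Open Scope ring_scope.
Set Implicit Arguments. Unset Strict Implicit.

(* Write F_th x = P_th(X <= x) and G_th x = P_th(X >= x); by (A2), F_th x
   decreases and G_th x increases strictly in th.  If some (L, U) in M_alpha
   had thL x = t < L x, a parameter th in Theta slightly above t (Theta is
   open) and below L x would satisfy {L(X) <= th} <= {X <= x - 1} by (D1),
   an event of probability 1 - G_th x < 1 - G_t x = 1 - alpha/2, against (D2).
   Symmetrically U >= thU, so the fiducial interval is contained in every
   interval of M_alpha, pointwise in x; both optimality claims follow.  It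
   lies in M_alpha itself: a finite set of k with th < thL k lies above its
   least element m, and P_th(X >= m) <= G_(thL m) m = alpha/2. *)

Lemma finite_set_has_min d (T : orderType d) (A : set T) :
  finite_set A -> A !=set0 -> exists2 m, A m & forall a, A a -> (m <= a)%O.
Proof.
move=> /finite_fsetP[F ->] [a Fa].
exists (\big[Order.min/a]_(k <- F) k); last by move=> b Fb; exact: ge_bigmin_seq.
rewrite big_seq; apply: (big_ind (fun m => m \in F)) => // x y Fx Fy.
by rewrite /Order.min; case: ifP.
Qed.

Lemma finite_set_has_max d (T : orderType d) (A : set T) :
  finite_set A -> A !=set0 -> exists2 m, A m & forall a, A a -> (a <= m)%O.
Proof. exact: (@finite_set_has_min _ T^d). Qed.

Lemma consecutive_homo d (T : porderType d) (X : set int) (f : int -> T) :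
  consecutive X -> (forall x, X x -> X (x + 1) -> (f x <= f (x + 1))%O) ->
  forall x y, X x -> X y -> x <= y -> (f x <= f y)%O.
Proof.
move=> cX f_succ x y Xx Xy xy; have [n ynx] : exists n : nat, y = x + n%:Z.
  by exists `|y - x|%N; rewrite abszE ger0_norm ?subrKC // subr_ge0.
elim: n y {xy} ynx Xy => [|n IHn] y -> Xy; first by rewrite addr0.
have Xyn : X (x + n%:Z) by apply: (cX _ _ _ Xx Xy); apply/andP; split; lia.
apply: le_trans (IHn _ erefl Xyn) _.
by rewrite -addn1 PoszD addrA f_succ // -addrA -PoszD addn1.
Qed.

Lemma open_ereal_nbhs (R : realType) (A : set R) (a b : \bar R) t :
  open A -> A t -> (a < t%:E)%E -> (t%:E < b)%E ->
  exists2 e : R, 0 < e & forall y, `|y - t| < e -> A y /\ (a < y%:E < b)%E.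
Proof.
move=> oA At a_t t_b; have /nbhs_ballP[d d0 dA] := oA t At.
have [delta hdelta] := lt_ereal_nbhs a_t t_b.
exists (Num.min d delta%:num) => [|y]; first by rewrite lt_min d0 gt0.
rewrite lt_min => /andP[yd ydelta]; split; last exact: hdelta.
by apply: dA; rewrite /ball /= distrC.
Qed.

Section Probability.
Variables (R : realType) (X : set int) (p : R -> int -> R) (th : R).
Hypothesis p_ge0 : forall k, X k -> 0 <= p th k.

Lemma Pr_ge0 E : (0 <= Pr X p th E)%E.
Proof. by apply: esum_ge0 => k [Xk _]; rewrite lee_fin p_ge0. Qed.

Lemma Pr_le E F : (forall k, X k -> E k -> F k) -> (Pr X p th E <= Pr X p th F)%E.
Proof.
move=> EF; rewrite /Pr !esum_mkcondr; apply: le_esum => k Xk.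
case: ifPn => [/set_mem Ek|_]; first by rewrite ifT //; apply/mem_set/EF.
by case: ifP; rewrite // lee_fin p_ge0.
Qed.

Lemma Pr_ext E F : (forall k, X k -> (E k <-> F k)) -> Pr X p th E = Pr X p th F.
Proof.
by move=> EF; rewrite /Pr; congr esum; apply/seteqP; split=> k [Xk /(EF k Xk)].
Qed.

Lemma Pr_setID E B :
  Pr X p th E = (Pr X p th (E `&` B) + Pr X p th (E `&` ~` B))%E.
Proof.
by rewrite /Pr (esumID B) ?setIA // => k [Xk _]; rewrite lee_fin p_ge0.
Qed.

Lemma Pr_set1 E x : X x -> (forall k, X k -> (E k <-> k = x)) ->
  Pr X p th E = (p th x)%:E.
Proof.
move=> Xx Ex; rewrite /Pr (_ : X `&` E = [set x]) ?esum_set1 ?lee_fin ?p_ge0 //.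
by apply/seteqP; split=> [k [Xk /(Ex k Xk)]|k ->] //=; split=> //; apply/(Ex x).
Qed.

Lemma Pr_eq0 E : (forall k, X k -> ~ E k) -> Pr X p th E = 0%E.
Proof. by move=> nE; rewrite /Pr esum1 // => k [Xk /(nE k Xk)]. Qed.

Lemma fsum_le_Pr E A : finite_set A -> A `<=` X `&` E ->
  (\sum_(k \in A) (p th k)%:E <= Pr X p th E)%E.
Proof. by move=> finA AXE; apply: esum_ge; exists A. Qed.

Lemma Pr_le_fsum E c :
  (forall A, finite_set A -> A `<=` X `&` E ->
     (\sum_(k \in A) (p th k)%:E <= c)%E) ->
  (Pr X p th E <= c)%E.
Proof.
by move=> fsum_le; apply: ge_ereal_sup => _ [A [finA AXE] <-]; apply: fsum_le.
Qed.

End Probability.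

Lemma le_exp_length (R : realType) (X : set int) (p : R -> int -> R) th
    (L1 U1 L2 U2 : int -> \bar R) :
  (forall k, X k -> 0 <= p th k) ->
  (forall k, X k -> (ilength L1 U1 k <= ilength L2 U2 k)%E) ->
  (exp_length X p th L1 U1 <= exp_length X p th L2 U2)%E.
Proof.
move=> p_ge0 len_le; apply: leeB; apply: le_esum => k Xk;
  rewrite ?funeposE ?funenegE; apply: le_max2; rewrite ?leeN2 //;
  by apply: lee_wpmul2l; rewrite ?lee_fin ?p_ge0 ?len_le.
Qed.

Section IntervalClass.
Variables (R : realType) (Theta : set R) (X : set int) (p : R -> int -> R).
Variables (alpha : R) (L U : int -> \bar R).
Hypothesis LU : in_M Theta X p alpha L U.

Lemma in_M_coverL th : Theta th ->
  ((1 - alpha / 2)%:E <= Pr X p th [set k | (L k <= th%:E)%E])%E.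
Proof.
by case: LU => _ + _ Tth => /le_trans; apply; apply: ereal_inf_lbound; exists th.
Qed.

Lemma in_M_coverU th : Theta th ->
  ((1 - alpha / 2)%:E <= Pr X p th [set k | (th%:E <= U k)%E])%E.
Proof.
by case: LU => _ _ + Tth => /le_trans; apply; apply: ereal_inf_lbound; exists th.
Qed.

Hypothesis cX : consecutive X.

Lemma in_M_homoL x y : X x -> X y -> x <= y -> (L x <= L y)%E.
Proof. by apply: consecutive_homo => // z Xz Xz1; case: LU => /(_ z Xz Xz1)[]. Qed.

Lemma in_M_homoU x y : X x -> X y -> x <= y -> (U x <= U y)%E.
Proof. by apply: consecutive_homo => // z Xz Xz1; case: LU => /(_ z Xz Xz1)[]. Qed.

End IntervalClass.

Section DiscreteModel.
Variables (R : realType) (Theta : set R) (X : set int) (p : R -> int -> R).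
Hypothesis M : discrete_model Theta X p.

Lemma model_open : open Theta. Proof. by case: M => [[[]]]. Qed.

Lemma model_consecutive : consecutive X. Proof. by case: M => [[_ []]]. Qed.

Lemma model_pmf_gt0 th x : Theta th -> X x -> 0 < p th x.
Proof. by case: M => _ _ A1 _ _; apply: A1. Qed.

Lemma model_pmf_ge0 th : Theta th -> forall x, X x -> 0 <= p th x.
Proof. by move=> Tth x Xx; rewrite ltW // model_pmf_gt0. Qed.

Lemma Pr_setC th E : Theta th ->
  (Pr X p th E + Pr X p th (~` E) = 1)%E.
Proof.
case: M => _ PrT _ _ _ Tth.
by rewrite -(PrT _ Tth) (Pr_setID (model_pmf_ge0 Tth) setT E) !setTI.
Qed.

Lemma Pr_fin_num th E : Theta th -> Pr X p th E \is a fin_num.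
Proof.
move=> Tth; have ge0 := Pr_ge0 (model_pmf_ge0 Tth).
rewrite ge0_fin_numE // (@le_lt_trans _ _ 1%E) ?ltry // -(Pr_setC E Tth).
by rewrite leeDl.
Qed.

Lemma Pr_ge_setC th E c : Theta th ->
  (Pr X p th (~` E) <= c%:E)%E -> ((1 - c)%:E <= Pr X p th E)%E.
Proof.
move=> Tth; have := Pr_setC E Tth.
rewrite -(fineK (Pr_fin_num E Tth)) -(fineK (Pr_fin_num (~` E) Tth)) -EFinD.
by move=> [] ?; rewrite !lee_fin; lra.
Qed.

Definition lower_tail th x := fine (Pr X p th [set k : int | k <= x]).
Definition upper_tail th x := fine (Pr X p th [set k : int | x <= k]).

Lemma Pr_lower_tail th x : Theta th ->
  Pr X p th [set k : int | k <= x] = (lower_tail th x)%:E.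
Proof. by move=> Tth; rewrite fineK // Pr_fin_num. Qed.

Lemma Pr_upper_tail th x : Theta th ->
  Pr X p th [set k : int | x <= k] = (upper_tail th x)%:E.
Proof. by move=> Tth; rewrite fineK // Pr_fin_num. Qed.

Lemma Pr_le_lower_tail th E x : Theta th -> (forall k, X k -> E k -> k <= x) ->
  (Pr X p th E <= (lower_tail th x)%:E)%E.
Proof.
by move=> Tth Ex; rewrite -Pr_lower_tail //; apply: Pr_le => //; apply: model_pmf_ge0.
Qed.

Lemma Pr_le_upper_tail th E x : Theta th -> (forall k, X k -> E k -> x <= k) ->
  (Pr X p th E <= (upper_tail th x)%:E)%E.
Proof.
by move=> Tth Ex; rewrite -Pr_upper_tail //; apply: Pr_le => //; apply: model_pmf_ge0.
Qed.

Lemma upper_tailS th x : Theta th -> upper_tail th (x + 1) = 1 - lower_tail th x.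
Proof.
move=> Tth; have := Pr_setC [set k : int | k <= x] Tth.
rewrite Pr_lower_tail // (@Pr_ext _ _ _ _ _ [set k : int | x + 1 <= k]).
  by rewrite Pr_upper_tail // -EFinD => -[] <-; lra.
by move=> k _ /=; split; lia.
Qed.

Lemma lower_tail_pmf th x : Theta th -> X x ->
  lower_tail th x = lower_tail th (x - 1) + p th x.
Proof.
move=> Tth Xx; have ge0 := model_pmf_ge0 Tth.
apply: EFin_inj; rewrite EFinD -!Pr_lower_tail //.
rewrite (Pr_setID ge0 _ [set k : int | k <= x - 1]) //.
congr (_ + _)%E; first by apply: Pr_ext => k _ /=; split; [case|]; lia.
by apply: Pr_set1 => // k _ /=; split; [case; lia|move=> ->; split; lia].
Qed.

Lemma upper_tail_pmf th x : Theta th -> X x ->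
  upper_tail th x = upper_tail th (x + 1) + p th x.
Proof.
move=> Tth Xx; have := upper_tailS (x - 1) Tth; rewrite subrK => ->.
by rewrite upper_tailS // (lower_tail_pmf Tth Xx); lra.
Qed.

Lemma lower_tail_decreasing x t1 t2 : X x -> ~ is_max X x -> Theta t1 -> Theta t2 ->
  t1 < t2 -> lower_tail t2 x < lower_tail t1 x.
Proof.
move=> Xx xnmax T1 T2 t12; rewrite -lte_fin -!Pr_lower_tail //.
by case: M => _ _ _ A2 _; apply: A2.
Qed.

Lemma pred_in_X x : X x -> ~ is_min X x -> X (x - 1).
Proof.
move=> Xx xnmin; have [y Xy yx] : exists2 y, X y & y < x.
  apply: contra_notP xnmin => xmin; split=> // y Xy; rewrite leNgt.
  by apply/negP => yx; apply: xmin; exists y.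
by apply: (model_consecutive Xy Xx); apply/andP; split; lia.
Qed.

Lemma pred_not_max x : X x -> ~ is_max X (x - 1).
Proof. by move=> Xx [_ /(_ x Xx)]; lia. Qed.

Lemma succ_not_min x : X x -> ~ is_min X (x + 1).
Proof. by move=> Xx [_ /(_ x Xx)]; lia. Qed.

Lemma upper_tail_increasing x t1 t2 : X x -> ~ is_min X x -> Theta t1 -> Theta t2 ->
  t1 < t2 -> upper_tail t1 x < upper_tail t2 x.
Proof.
move=> Xx xnmin T1 T2 t12; rewrite -[x](subrK 1) !upper_tailS //.
by have := lower_tail_decreasing (pred_in_X Xx xnmin) (pred_not_max Xx) T1 T2 t12; lra.
Qed.

End DiscreteModel.

Section Fiducial.
Variables (R : realType) (Theta : set R) (X : set int) (p : R -> int -> R).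
Variables (alpha : R) (thL thU : int -> \bar R).
Hypothesis M : discrete_model Theta X p.
Hypotheses (alpha_gt0 : 0 < alpha) (alpha_lt1 : alpha < 1).
Hypothesis fid : is_fiducial Theta X p alpha thL thU.

Local Notation F := (lower_tail X p).
Local Notation G := (upper_tail X p).

Lemma fidL_min x : X x -> is_min X x -> thL x = ereal_inf (EFin @` Theta).
Proof. by move=> Xx xmin; have [+ _] := fid Xx; case: asboolP. Qed.

Lemma fidL_not_min x : X x -> ~ is_min X x ->
  exists t, [/\ Theta t, thL x = t%:E & G t x = alpha / 2].
Proof.
move=> Xx xnmin; have [+ _] := fid Xx; case: asboolP => // _ [t [Tt -> Gt]].
by exists t; split=> //; apply: EFin_inj; rewrite -Gt (Pr_upper_tail M).
Qed.

Lemma fidU_max x : X x -> is_max X x -> thU x = ereal_sup (EFin @` Theta).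
Proof. by move=> Xx xmax; have [_ +] := fid Xx; case: asboolP. Qed.

Lemma fidU_not_max x : X x -> ~ is_max X x ->
  exists t, [/\ Theta t, thU x = t%:E & F t x = alpha / 2].
Proof.
move=> Xx xnmax; have [_ +] := fid Xx; case: asboolP => // _ [t [Tt -> Ft]].
by exists t; split=> //; apply: EFin_inj; rewrite -Ft (Pr_lower_tail M).
Qed.

Lemma in_M_le_fidL L U x : in_M Theta X p alpha L U -> X x -> (L x <= thL x)%E.
Proof.
move=> LU Xx; rewrite leNgt; apply/negP => thLx_lt.
have [xmin|xnmin] := pselect (is_min X x).
  move: thLx_lt; rewrite fidL_min // => /ereal_inf_lt[_ [th Tth <-] thLx].
  have := in_M_coverL LU Tth; rewrite Pr_eq0 ?lee_fin; first by have := alpha_lt1; lra.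
  move=> k Xk /=; apply/negP; rewrite -ltNge.
  exact: lt_le_trans thLx (in_M_homoL LU (model_consecutive M) Xx Xk (xmin.2 k Xk)).
have [t [Tt thLx Gt]] := fidL_not_min Xx xnmin; rewrite thLx in thLx_lt.
have [e e0 near_t] := open_ereal_nbhs (model_open M) Tt (ltNyr t) thLx_lt.
set th := t + e / 2.
have [Tth /andP[_ th_lt_Lx]] : Theta th /\ (-oo < th%:E < L x)%E.
  by apply: near_t; rewrite /th addrC addKr ger0_norm; lra.
have below_x : (Pr X p th [set k | (L k <= th%:E)%E] <= (F th (x - 1))%:E)%E.
  apply: (Pr_le_lower_tail M Tth) => k Xk /= Lk; rewrite leNgt; apply/negP => kx.
  have Lxk : (L x <= L k)%E by apply: (in_M_homoL LU (model_consecutive M)) => //; lia.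
  by move: (lt_le_trans th_lt_Lx (le_trans Lxk Lk)); rewrite ltxx.
have := le_trans (in_M_coverL LU Tth) below_x; rewrite lee_fin.
have := upper_tailS M (x - 1) Tth; rewrite subrK.
have t_lt_th : t < th by rewrite /th; lra.
by have := upper_tail_increasing M Xx xnmin Tt Tth t_lt_th; lra.
Qed.

Lemma in_M_ge_fidU L U x : in_M Theta X p alpha L U -> X x -> (thU x <= U x)%E.
Proof.
move=> LU Xx; rewrite leNgt; apply/negP => Ux_lt.
have [xmax|xnmax] := pselect (is_max X x).
  move: Ux_lt; rewrite fidU_max // => /ereal_sup_gt[_ [th Tth <-] Ux_lt_th].
  have := in_M_coverU LU Tth; rewrite Pr_eq0 ?lee_fin; first by have := alpha_lt1; lra.
  move=> k Xk /=; apply/negP; rewrite -ltNge.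
  exact: le_lt_trans (in_M_homoU LU (model_consecutive M) Xk Xx (xmax.2 k Xk)) Ux_lt_th.
have [t [Tt thUx Ft]] := fidU_not_max Xx xnmax; rewrite thUx in Ux_lt.
have [e e0 near_t] := open_ereal_nbhs (model_open M) Tt Ux_lt (ltry t).
set th := t - e / 2.
have [Tth /andP[Ux_lt_th _]] : Theta th /\ (U x < th%:E < +oo)%E.
  by apply: near_t; rewrite /th addrAC subrr add0r normrN ger0_norm; lra.
have above_x : (Pr X p th [set k | (th%:E <= U k)%E] <= (G th (x + 1))%:E)%E.
  apply: (Pr_le_upper_tail M Tth) => k Xk /= Uk; rewrite leNgt; apply/negP => kx.
  have Ukx : (U k <= U x)%E by apply: (in_M_homoU LU (model_consecutive M)) => //; lia.
  by move: (le_lt_trans (le_trans Uk Ukx) Ux_lt_th); rewrite ltxx.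
have := le_trans (in_M_coverU LU Tth) above_x; rewrite lee_fin (upper_tailS M) //.
have th_lt_t : th < t by rewrite /th; lra.
by have := lower_tail_decreasing M Xx xnmax Tth Tt th_lt_t; lra.
Qed.

Lemma fid_nondecreasing x : X x -> X (x + 1) ->
  (thL x <= thL (x + 1))%E /\ (thU x <= thU (x + 1))%E.
Proof.
move=> Xx Xx1; split.
  have [s [Ts -> Gs]] := fidL_not_min Xx1 (succ_not_min Xx).
  have [xmin|xnmin] := pselect (is_min X x).
    by rewrite fidL_min //; apply: ereal_inf_lbound; exists s.
  have [t [Tt -> Gt]] := fidL_not_min Xx xnmin.
  rewrite lee_fin leNgt; apply/negP => s_lt_t.
  have := upper_tail_increasing M Xx xnmin Ts Tt s_lt_t.
  by have := upper_tail_pmf M Ts Xx; have := model_pmf_gt0 M Ts Xx; lra.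
have xnmax : ~ is_max X x by have := pred_not_max Xx1; rewrite addrK.
have [t [Tt -> Ft]] := fidU_not_max Xx xnmax.
have [x1max|x1nmax] := pselect (is_max X (x + 1)).
  by rewrite fidU_max //; apply: ereal_sup_ubound; exists t.
have [s [Ts -> Fs]] := fidU_not_max Xx1 x1nmax.
rewrite lee_fin leNgt; apply/negP => s_lt_t.
have := lower_tail_decreasing M Xx1 x1nmax Ts Tt s_lt_t.
have := lower_tail_pmf M Tt Xx1; rewrite addrK.
by have := model_pmf_gt0 M Tt Xx1; lra.
Qed.

Lemma fid_coverL th : Theta th ->
  ((1 - alpha / 2)%:E <= Pr X p th [set k | (thL k <= th%:E)%E])%E.
Proof.
move=> Tth; apply: (Pr_ge_setC M Tth); apply: Pr_le_fsum => A finA AXE.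
have [->|/set0P A0] := eqVneq A set0.
  by rewrite fsbig_set0 lee_fin; have := alpha_gt0; lra.
have [m Am m_le] := finite_set_has_min finA A0.
have [Xm /= thLm_gt] := AXE m Am.
have mnmin : ~ is_min X m.
  by move=> mmin; apply: thLm_gt; rewrite fidL_min //; apply: ereal_inf_lbound; exists th.
have [t [Tt thLm Gt]] := fidL_not_min Xm mnmin.
have th_lt_t : th < t by move: thLm_gt; rewrite thLm lee_fin => /negP; rewrite -ltNge.
have A_sub : A `<=` X `&` [set k | m <= k].
  by move=> k Ak; split; [case: (AXE k Ak)|apply: m_le].
apply: le_trans (fsum_le_Pr p th finA A_sub) _.
by rewrite (Pr_upper_tail M) // lee_fin -Gt ltW // (upper_tail_increasing M).
Qed.

Lemma fid_coverU th : Theta th ->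
  ((1 - alpha / 2)%:E <= Pr X p th [set k | (th%:E <= thU k)%E])%E.
Proof.
move=> Tth; apply: (Pr_ge_setC M Tth); apply: Pr_le_fsum => A finA AXE.
have [->|/set0P A0] := eqVneq A set0.
  by rewrite fsbig_set0 lee_fin; have := alpha_gt0; lra.
have [m Am m_ge] := finite_set_has_max finA A0.
have [Xm /= thUm_lt] := AXE m Am.
have mnmax : ~ is_max X m.
  by move=> mmax; apply: thUm_lt; rewrite fidU_max //; apply: ereal_sup_ubound; exists th.
have [t [Tt thUm Ft]] := fidU_not_max Xm mnmax.
have t_lt_th : t < th by move: thUm_lt; rewrite thUm lee_fin => /negP; rewrite -ltNge.
have A_sub : A `<=` X `&` [set k | k <= m].
  by move=> k Ak; split; [case: (AXE k Ak)|apply: m_ge].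
apply: le_trans (fsum_le_Pr p th finA A_sub) _.
by rewrite (Pr_lower_tail M) // lee_fin -Ft ltW // (lower_tail_decreasing M).
Qed.

Lemma fid_in_M : in_M Theta X p alpha thL thU.
Proof.
split; first exact: fid_nondecreasing.
  by apply: le_ereal_inf_tmp => _ [th Tth <-]; apply: fid_coverL.
by apply: le_ereal_inf_tmp => _ [th Tth <-]; apply: fid_coverU.
Qed.

End Fiducial.

Unset Implicit Arguments.

Theorem proposition10 (R : realType) (Theta : set R) (X : set int)
  (p : R -> int -> R) (alpha : R) (thL thU : int -> \bar R) :
  discrete_model Theta X p -> 0 < alpha < 1 ->
  is_fiducial Theta X p alpha thL thU ->
  [/\ in_M Theta X p alpha thL thU,
      (forall L U, in_M Theta X p alpha L U ->
         forall th, Theta th ->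
           (exp_length X p th thL thU <= exp_length X p th L U)%E) &
      (forall L U, in_M Theta X p alpha L U ->
         forall x, X x -> (ilength thL thU x <= ilength L U x)%E)].
Proof.
move=> M /andP[alpha_gt0 alpha_lt1] fid.
have shortest L U : in_M Theta X p alpha L U ->
    forall x, X x -> (ilength thL thU x <= ilength L U x)%E.
  move=> LU x Xx; apply: leeB.
    exact: (in_M_ge_fidU M alpha_gt0 alpha_lt1 fid LU Xx).
  exact: (in_M_le_fidL M alpha_gt0 alpha_lt1 fid LU Xx).
split=> [|L U LU th Tth|//]; first exact: (fid_in_M M alpha_gt0 fid).
exact: le_exp_length (model_pmf_ge0 M Tth) (shortest L U LU).
Qed.
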